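(* Let $G$ be a cofinite group and let $X=\{*\}\sqcup E(X)$ be a cofinite graph with a single vertex $*$. Let $\alpha\colon X\to G$ be a uniformly continuous map with $\alpha( * )=1_G$ and $\alpha(\overline e)=\alpha(e)^{-1}$ for all $e\in E(X)$, and let $\Gamma=\Gamma(G,X)$ be the cofinite Cayley graph. Then $\alpha$ generates $G$ topologically, i.e. $\overline{\langle\alpha(X)\rangle}=G$, if and only if $\Gamma$ is cofinitely connected.
   Context: A graph $\Gamma$ is a set $\Gamma=V(\Gamma)\sqcup E(\Gamma)$ with maps $s,t\colon E(\Gamma)\to V(\Gamma)$ and a fixed-point-free involution $e\mapsto\overline e$ of $E(\Gamma)$ with $s(\overline e)=t(e)$, $t(\overline e)=s(e)$. An equivalence relation $R$ on a graph is compatible if $R\subseteq (V\times V)\cup(E\times E)$, $(e,e')\in R$ implies $(s(e),s(e')),(t(e),t(e')),(\overline e,\overline{e'})\in R$, and $(e,\overline e)\notin R$ for all edges $e$; then $\Gamma/R$ is a graph. A cofinite entourage is an entourage that is an equivalence relation with finitely many classes. A cofinite graph is a graph with a Hausdorff uniformity in which the compatible cofinite entourages form a fundamental system. A cofinite group is a group with a Hausdorff uniformity having a fundamental system of cofinite congruences (cofinite entourages $R$ with $(a,b),(c,d)\in R\Rightarrow(ac,bd)\in R$). The cofinite Cayley graph $\Gamma(G,X)$ has $V=G\times\{*\}$, $E=G\times E(X)$, $s(g,e)=(g,* )$, $t(g,e)=(g\alpha(e),* )$, $\overline{(g,e)}=(g\alpha(e),\overline e)$, and carries the product uniformity of $G\times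 X$ (this makes it a cofinite graph). A cofinite graph is cofinitely connected if $\Gamma/R$ is path connected (any two vertices joined by a finite edge path $e_1\cdots e_n$ with $t(e_i)=s(e_{i+1})$) for every compatible cofinite entourage $R$. *)

From mathcomp Require Import all_boot classical_sets boolp topology.
Set Implicit Arguments. Unset Strict Implicit. Unset Printing Implicit Defensive.
Local Open Scope classical_set_scope.

Definition hausdorff_unif (T : uniformType) : Prop :=
  forall x y : T, (forall A, entourage A -> A (x, y)) -> x = y.

Definition equiv_rel (T : Type) (R : set (T * T)) : Prop :=
  (forall x, R (x, x)) /\ (forall x y, R (x, y) -> R (y, x)) /\
  (forall x y z, R (x, y) -> R (y, z) -> R (x, z)).

Definition finitely_many_classes (T : Type) (R : set (T * T)) : Prop :=
  exists (n : nat) (f : 'I_n -> T), forall x, exists i, R (x, f i).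

Definition cofinite_entourage (T : uniformType) (R : set (T * T)) : Prop :=
  entourage R /\ equiv_rel R /\ finitely_many_classes R.

Record group_ops (G : Type) := GroupOps {
  gmul : G -> G -> G; ginv : G -> G; gone : G }.

Definition is_group (G : Type) (o : group_ops G) : Prop :=
  (forall a b c, gmul o a (gmul o b c) = gmul o (gmul o a b) c) /\
  (forall a, gmul o (gone o) a = a) /\ (forall a, gmul o a (gone o) = a) /\
  (forall a, gmul o (ginv o a) a = gone o) /\ (forall a, gmul o a (ginv o a) = gone o).

Definition congruence (G : Type) (o : group_ops G) (R : set (G * G)) : Prop :=
  forall a b c d, R (a, b) -> R (c, d) -> R (gmul o a c, gmul o b d).

Definition cofinite_group (G : uniformType) (o : group_ops G) : Prop :=
  is_group o /\ hausdorff_unif G /\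
  forall U, entourage U ->
    exists R, cofinite_entourage R /\ congruence o R /\ R `<=` U.

Definition is_subgroup (G : Type) (o : group_ops G) (H : set G) : Prop :=
  H (gone o) /\ (forall a b, H a -> H b -> H (gmul o a b)) /\
  (forall a, H a -> H (ginv o a)).

Definition gen_subgroup (G : Type) (o : group_ops G) (A : set G) : set G :=
  [set x | forall H, is_subgroup o H -> A `<=` H -> H x].

(* A graph on a carrier T = V ⊔ E: gE selects the edges (the others are the
   vertices); gsrc, gtgt, grev are only meaningful on edges. *)
Record graph_data (T : Type) := GraphData {
  gE : T -> Prop; gsrc : T -> T; gtgt : T -> T; grev : T -> T }.

Definition is_graph (T : Type) (g : graph_data T) : Prop :=
  forall e, gE g e ->
    ~ gE g (gsrc g e) /\ ~ gE g (gtgt g e) /\ gE g (grev g e) /\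
    grev g (grev g e) = e /\ grev g e <> e /\
    gsrc g (grev g e) = gtgt g e /\ gtgt g (grev g e) = gsrc g e.

Definition compatible (T : Type) (g : graph_data T) (R : set (T * T)) : Prop :=
  equiv_rel R /\
  (forall x y, R (x, y) -> (gE g x <-> gE g y)) /\
  (forall e e', gE g e -> R (e, e') ->
     R (gsrc g e, gsrc g e') /\ R (gtgt g e, gtgt g e') /\ R (grev g e, grev g e')) /\
  (forall e, gE g e -> ~ R (e, grev g e)).

Definition cofinite_graph (T : uniformType) (g : graph_data T) : Prop :=
  is_graph g /\ hausdorff_unif T /\
  forall U, entourage U ->
    exists R, cofinite_entourage R /\ compatible g R /\ R `<=` U.

(* An edge path in the quotient graph Γ/R from the class of x to the class
   of y, given by representatives e_1 ... e_n of the edge classes: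
   [x] = s[e_1], t[e_i] = s[e_{i+1}], t[e_n] = [y]. *)
Fixpoint quot_walk (T : Type) (g : graph_data T) (R : set (T * T))
    (x : T) (p : seq T) (y : T) : Prop :=
  match p with
  | [::] => R (x, y)
  | e :: p' => gE g e /\ R (x, gsrc g e) /\ quot_walk g R (gtgt g e) p' y
  end.

Definition quotient_path_connected (T : Type) (g : graph_data T)
    (R : set (T * T)) : Prop :=
  forall v w, ~ gE g v -> ~ gE g w -> exists p : seq T, quot_walk g R v p w.

Definition cofinitely_connected (T : uniformType) (g : graph_data T) : Prop :=
  forall R, cofinite_entourage R -> compatible g R -> quotient_path_connected g R.

(* Carrier G × X (with the product uniformity): vertices (g, star),
   edges (g, e) for e an edge of X. *)
Definition cayley_graph (G X : Type) (o : group_ops G) (Xg : graph_data X)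
    (star : X) (alpha : X -> G) : graph_data (G * X) :=
  {| gE := fun gx => gE Xg gx.2;
     gsrc := fun gx => (gx.1, star);
     gtgt := fun gx => (gmul o gx.1 (alpha gx.2), star);
     grev := fun gx => (gmul o gx.1 (alpha gx.2), grev Xg gx.2) |}.

From Pilot Require Import Defs.
From mathcomp Require Import all_boot classical_sets boolp topology.
Set Implicit Arguments. Unset Strict Implicit.
Local Open Scope classical_set_scope.

(* For a compatible cofinite entourage R of the Cayley graph, the labels k
   such that every vertex (a, star) is joined in Γ/R to (a k, star) form a
   subgroup containing α(X); so every element close to the generated subgroup
   is reachable, and density gives connectedness.  Conversely, pull a cofinite
   congruence C of G back along the uniformly continuous α to a compatible
   cofinite entourage D of X: an edge of the quotient by C × D moves a vertex
   (a, star) only to (a α(e), star) up to C, so starting from 1 every vertex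
   (h, star) is C-close to an element of ⟨α(X)⟩. *)

Section QuotWalk.
Variables (T : Type) (g : graph_data T) (R : set (T * T)).
Hypothesis eqR : Defs.equiv_rel R.

Lemma quot_walk_trans_r x p y z :
  quot_walk g R x p y -> R (y, z) -> quot_walk g R x p z.
Proof.
have [_ [_ Rtrans]] := eqR.
elim: p x => [|e p IH] x /=; first exact: Rtrans.
by move=> [Ee [Rxe W]] Ryz; split=> //; split=> //; apply: IH W Ryz.
Qed.

Lemma quot_walk_trans_l x x' p y :
  R (x, x') -> quot_walk g R x' p y -> quot_walk g R x p y.
Proof.
have [_ [_ Rtrans]] := eqR.
case: p => [|e p] /=; first exact: Rtrans.
by move=> Rxx' [Ee [Rx'e W]]; split=> //; split=> //; apply: Rtrans Rx'e.
Qed.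

Lemma quot_walk_cat x p y q z :
  quot_walk g R x p y -> quot_walk g R y q z -> quot_walk g R x (p ++ q) z.
Proof.
elim: p x => [|e p IH] x /=; first exact: quot_walk_trans_l.
by move=> [Ee [Rxe W]] Wq; split=> //; split=> //; apply: IH W Wq.
Qed.

Lemma quot_walk_rev x p y : is_graph g ->
  quot_walk g R x p y -> quot_walk g R y (rev (map (grev g) p)) x.
Proof.
have [Rrefl [Rsym _]] := eqR; move=> graph_g.
elim: p x => [|e p IH] x /=; first exact: Rsym.
move=> [Ee [Rxe W]]; rewrite rev_cons -cats1.
apply: quot_walk_cat (IH _ W) _ => /=.
have [_ [_ [Erev [_ [_ [-> ->]]]]]] := graph_g e Ee.
by split=> //; split; [exact: Rrefl|exact: Rsym].
Qed.

End QuotWalk.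

Section Subgroups.
Variables (G : Type) (o : group_ops G).

Lemma gen_subgroup_is_subgroup A : is_subgroup o (gen_subgroup o A).
Proof.
split; [|split].
- by move=> H [].
- by move=> a b Aa Ab H sH AH; apply: sH.2.1; [exact: Aa|exact: Ab].
- by move=> a Aa H sH AH; apply: sH.2.2; exact: Aa.
Qed.

Lemma sub_gen_subgroup A : A `<=` gen_subgroup o A.
Proof. by move=> a Aa H _; apply. Qed.

Lemma gen_subgroup_min A H :
  is_subgroup o H -> A `<=` H -> gen_subgroup o A `<=` H.
Proof. by move=> sH AH a; apply. Qed.

End Subgroups.

Definition prod_rel (T U : Type) (C : set (T * T)) (D : set (U * U)) :
    set ((T * U) * (T * U)) :=
  [set uv | C (uv.1.1, uv.2.1) /\ D (uv.1.2, uv.2.2)].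

Lemma equiv_rel_prod (T U : Type) (C : set (T * T)) (D : set (U * U)) :
  Defs.equiv_rel C -> Defs.equiv_rel D -> Defs.equiv_rel (prod_rel C D).
Proof.
move=> [Crefl [Csym Ctrans]] [Drefl [Dsym Dtrans]].
split; [|split].
- by move=> [a x]; split.
- by move=> [a x] [b y] [Cab Dxy]; split; [exact: Csym|exact: Dsym].
- move=> [a x] [b y] [c z] [Cab Dxy] [Cbc Dyz].
  by split; [exact: Ctrans Cbc|exact: Dtrans Dyz].
Qed.

Lemma cofinite_entourage_prod (T U : uniformType) (C : set (T * T))
    (D : set (U * U)) :
  cofinite_entourage C -> cofinite_entourage D ->
  cofinite_entourage (prod_rel C D : set ((T * U) * (T * U))).
Proof.
move=> [entC [eqC [n [f fC]]]] [entD [eqD [m [f' fD]]]].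
split; [exact: prod_entP|split; first exact: equiv_rel_prod].
exists #|{: 'I_n * 'I_m}|, (fun i => let: (j, l) := enum_val i in (f j, f' l)).
move=> [a x]; have [j Cj] := fC a; have [l Dl] := fD x.
by exists (enum_rank (j, l)); rewrite enum_rankK.
Qed.

Lemma prod_entourage_fst (T U : uniformType) (A : set ((T * U) * (T * U))) :
  entourage A -> exists2 B, entourage B &
    forall a b x, B (a, b) -> A ((a, x), (b, x)).
Proof.
move=> [[B1 B2] /= [entB1 entB2] sA]; exists B1 => // a b x Bab.
have [[[a' x'] [b' y']] Auv /= [Ea Eb Ex Ey]] :=
  sA ((a, b), (x, x)) (conj Bab (entourage_refl _ entB2)).
by rewrite Ea Eb Ex Ey in Auv.
Qed.

Section CayleyGraph.
Variables (G X : Type) (o : group_ops G) (Xg : graph_data X) (star : X)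
  (alpha : X -> G).
Hypothesis grp : is_group o.
Hypothesis star_vertex : forall x, ~ gE Xg x <-> x = star.
Hypothesis alpha_star : alpha star = gone o.
Hypothesis alpha_rev :
  forall e, gE Xg e -> alpha (grev Xg e) = ginv o (alpha e).

Local Notation Cay := (cayley_graph o Xg star alpha).
Local Notation "a * b" := (gmul o a b).

Lemma gmulA a b c : a * (b * c) = (a * b) * c.
Proof. by case: grp. Qed.

Lemma gmul1g a : gone o * a = a.
Proof. by case: grp => _ []. Qed.

Lemma gmulg1 a : a * gone o = a.
Proof. by case: grp => _ [_ []]. Qed.

Lemma gmulVg a : ginv o a * a = gone o.
Proof. by case: grp => _ [_ [_ []]]. Qed.

Lemma gmulgV a : a * ginv o a = gone o.
Proof. by case: grp => _ [_ [_ []]]. Qed.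

Lemma cayley_is_graph : is_graph Xg -> is_graph Cay.
Proof.
have nEstar : ~ gE Xg star by apply/star_vertex.
move=> gX [a e] /= Ee; have [_ [_ [Erev [revK [revNe _]]]]] := gX e Ee.
do 2!split=> //; split=> //.
rewrite alpha_rev // -gmulA gmulgV gmulg1 revK; split=> //.
by split=> [[]|] //; split.
Qed.

Definition quot_walk_labels (R : set ((G * X) * (G * X))) : set G :=
  [set k | forall a, exists p, quot_walk Cay R (a, star) p (a * k, star)].

Lemma quot_walk_labels_subgroup R : is_graph Xg -> Defs.equiv_rel R ->
  is_subgroup o (quot_walk_labels R).
Proof.
move=> gX eqR; have [Rrefl _] := eqR.
split; [|split].
- by move=> a; exists [::]; rewrite /= gmulg1.
- move=> k l Wk Wl a; have [p Wp] := Wk a; have [q Wq] := Wl (a * k).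
  by exists (p ++ q); rewrite gmulA; apply: quot_walk_cat Wp Wq.
- move=> k Wk a; have [p Wp] := Wk (a * ginv o k).
  exists (rev (map (grev Cay) p)).
  apply: quot_walk_rev => //; first exact: cayley_is_graph.
  by rewrite -gmulA gmulVg gmulg1 in Wp.
Qed.

Lemma range_sub_quot_walk_labels R : Defs.equiv_rel R ->
  range alpha `<=` quot_walk_labels R.
Proof.
move=> [Rrefl _] _ [x _ <-] a.
have [Ex|/star_vertex ->] := pselect (gE Xg x).
- by exists [:: (a, x)]; do 2!split=> //; apply: Rrefl.
- by exists [::]; rewrite /= alpha_star gmulg1; apply: Rrefl.
Qed.

Lemma cayley_compatible_prod C D :
  Defs.equiv_rel C -> congruence o C -> compatible Xg D ->
  (forall x y, D (x, y) -> C (alpha x, alpha y)) ->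
  compatible Cay (prod_rel C D).
Proof.
move=> eqC congC [eqD [DE [Dadj Drev]]] DC.
split; first exact: equiv_rel_prod.
split; first by move=> [a x] [b y] [_ Dxy]; apply: DE.
split; last by move=> [a x] /= Ex [_ Dxrx]; apply: (Drev x).
move=> [a x] [b y] /= Ex [Cab Dxy]; have [Dsrc [Dtgt Drv]] := Dadj _ _ Ex Dxy.
have Calpha : C (a * alpha x, b * alpha y) by apply: congC => //; exact: DC.
have [Drefl _] := eqD.
by split; [|split]; split=> //; apply: Drefl.
Qed.

Lemma quot_walk_coset C R H :
  Defs.equiv_rel C -> congruence o C ->
  (forall u v, R (u, v) -> C (u.1, v.1)) ->
  is_subgroup o H -> range alpha `<=` H ->
  forall s p t k, quot_walk Cay R s p t -> H k -> C (s.1, k) ->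
  exists2 k', H k' & C (t.1, k').
Proof.
move=> [Crefl [Csym Ctrans]] congC RC [_ [Hmul _]] alphaH s p.
elim: p s => [|e p IH] s t k /=.
- by move=> /RC Cst Hk Csk; exists k => //; apply: Ctrans Csk; exact: Csym.
- move=> [Ee [/RC Cse W]] Hk Csk; apply: IH W _ _.
  + by apply: Hmul Hk _; apply: alphaH; exists e.2.
  + by apply: congC => //; apply: Ctrans Csk; exact: Csym.
Qed.

End CayleyGraph.

Section CofiniteCayleyGraph.
Variables (G X : uniformType) (o : group_ops G) (Xg : graph_data X) (star : X)
  (alpha : X -> G).
Hypothesis cofG : cofinite_group o.
Hypothesis cofX : cofinite_graph Xg.
Hypothesis star_vertex : forall x, ~ gE Xg x <-> x = star.
Hypothesis alpha_star : alpha star = gone o.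
Hypothesis alpha_rev :
  forall e, gE Xg e -> alpha (grev Xg e) = ginv o (alpha e).

Local Notation Cay := (cayley_graph o Xg star alpha).
Local Notation "a * b" := (gmul o a b).

Lemma dense_cofinitely_connected :
  closure (gen_subgroup o (range alpha)) = [set: G] ->
  @cofinitely_connected (G * X)%type Cay.
Proof.
have [grp [_ congG]] := cofG; have [gX _] := cofX.
move=> dense R [entR [eqR _]] _ [a x] [b y] /= /star_vertex -> /star_vertex ->.
have [B entB BR] := prod_entourage_fst entR.
have [C [[entC [[Crefl [Csym _]] _]] [congC CB]]] := congG _ entB.
have : closure (gen_subgroup o (range alpha)) (ginv o a * b) by rewrite dense.
move=> /(_ _ (nbhs_entourage _ entC)) [k [Hk /xsectionP Ck]].
have sub_labels :
    gen_subgroup o (range alpha) `<=` quot_walk_labels o Xg star alpha R.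
  apply: gen_subgroup_min; first exact: quot_walk_labels_subgroup.
  exact: range_sub_quot_walk_labels.
have [p Wp] := sub_labels _ Hk a; exists p.
apply: quot_walk_trans_r Wp _ => //; apply/BR/CB/Csym.
have := congC _ _ _ _ (Crefl a) Ck.
by rewrite (gmulA grp) (gmulgV grp) (gmul1g grp).
Qed.

Lemma cofinitely_connected_dense : unif_continuous alpha ->
  @cofinitely_connected (G * X)%type Cay ->
  closure (gen_subgroup o (range alpha)) = [set: G].
Proof.
have [grp [_ congG]] := cofG; have [_ [_ compX]] := cofX.
move=> unif_alpha conn; apply/seteqP; split=> // h _ B /nbhsP [U entU UB].
have [C [[entC [eqC finC]] [congC CU]]] := congG _ entU.
have [D [cofD [compD DC]]] := compX _ (unif_alpha _ entC).
have cofCD := cofinite_entourage_prod (conj entC (conj eqC finC)) cofD.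
have nEstar : ~ gE Xg star by apply/star_vertex.
have DC' : forall x y, D (x, y) -> C (alpha x, alpha y) by move=> x y /DC.
have [p Wp] := conn _ cofCD (cayley_compatible_prod star eqC congC compD DC')
  (gone o, star) (h, star) nEstar nEstar.
have [k Hk Ck] : exists2 k, gen_subgroup o (range alpha) k & C (h, k).
  apply: (quot_walk_coset eqC congC _ (gen_subgroup_is_subgroup o _)
    (@sub_gen_subgroup _ o _) Wp) => /=.
  - by move=> u v [].
  - exact: (gen_subgroup_is_subgroup o _).1.
  - exact: (proj1 eqC).
by exists k; split=> //; apply/UB/xsectionP/CU.
Qed.

End CofiniteCayleyGraph.

Theorem mainTheorem3 (G : uniformType) (o : group_ops G)
  (X : uniformType) (Xg : graph_data X) (star : X) (alpha : X -> G) :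
  cofinite_group o ->
  cofinite_graph Xg ->
  (forall x, ~ gE Xg x <-> x = star) ->
  unif_continuous alpha ->
  alpha star = gone o ->
  (forall e, gE Xg e -> alpha (grev Xg e) = ginv o (alpha e)) ->
  (closure (gen_subgroup o (range alpha)) = [set: G] <->
   @cofinitely_connected (G * X)%type (cayley_graph o Xg star alpha)).
Proof.
move=> cofG cofX star_vertex unif_alpha alpha_star alpha_rev; split.
- exact: dense_cofinitely_connected.
- exact: cofinitely_connected_dense.
Qed.
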